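(* Let $n\ge1$ have canonical prime factorization $n=p_1^{\alpha_1}p_2^{\alpha_2}\cdots p_r^{\alpha_r}$, and let $d_1,\dots,d_{\tau(n)}$ be the positive divisors of $n$ (listed in any order). Then $$\det\Big[c_{d_i}\Big(\frac{n}{d_j}\Big)\Big]_{i,j=1}^{\tau(n)} = n^{\tau(n)/2}\,(-1)^{\sum_{i=1}^r \lfloor\frac{\alpha_i+1}{2}\rfloor\frac{\tau(n)}{\alpha_i+1}}.$$
   Context: For integers $m\ge1$ and $x$, the Ramanujan sum is $c_m(x)=\sum_{1\le j\le m,\ (j,m)=1} e^{2\pi i jx/m}$. $\tau(n)$ denotes the number of positive divisors of $n$. *)

From HB Require Import structures.
From mathcomp Require Import all_boot all_order all_algebra.
From mathcomp Require Import reals exp trigo.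
From mathcomp Require Import complex.
Set Implicit Arguments. Unset Strict Implicit. Unset Printing Implicit Defensive.
Import Order.TTheory GRing.Theory Num.Theory.
Local Open Scope ring_scope.

Definition expi2pi (R : realType) (t : R) : R[i] :=
  (cos (2 * pi * t) +i* sin (2 * pi * t))%C.

Definition ramanujan_sum (R : realType) (m : nat) (x : int) : R[i] :=
  \sum_(1 <= j < m.+1 | coprime j m) expi2pi ((j%:R * x%:~R) / m%:R : R).

Definition tau (n : nat) : nat := size (divisors n).

From HB Require Import structures.
From mathcomp Require Import all_boot all_order all_algebra perm.
From mathcomp Require Import reals exp trigo.
From mathcomp Require Import complex.
From mathcomp Require Import ring lra zify.
Set Implicit Arguments. Unset Strict Implicit. Unset Printing Implicit Defensive.
Import Order.TTheory GRing.Theory Num.Theory.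

(* Sort the divisors increasingly, d_1 < ... < d_k, and let Z = ([d_j | d_i])
   be their divisibility matrix, which is unitriangular.  Grouping 1 <= j <= m
   by gcd(j, m) shows that sum_(d | m) c_d(x) is the geometric sum
   sum_(j = 1..m) e^(2 pi i j x / m) = m [m | x].  Hence Z C = diag(d_i) B with
   B = ([d_i | n / d_j]), and B is Z with its rows reversed, since n / d_j runs
   through the divisors in decreasing order.  Therefore
   det C = (prod_i d_i) sign(reversal) = n^(k/2) (-1)^floor(k/2), and since
   k = prod_i (alpha_i + 1), floor(k/2) has the parity of
   sum_i floor((alpha_i + 1)/2) k/(alpha_i + 1).  Listing the divisors in
   another order conjugates C by a permutation matrix. *)

Lemma codivisorK m d : 0 < m -> d %| m -> m %/ (m %/ d) = d.
Proof. by move=> m_gt0 dvd_dm; rewrite divnA // mulKn // (dvdn_gt0 m_gt0). Qed.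

Lemma perm_codivisors m : 0 < m ->
  perm_eq [seq m %/ d | d <- divisors m] (divisors m).
Proof.
move=> m_gt0; apply: uniq_perm.
- rewrite map_inj_in_uniq ?divisors_uniq // => a b.
  rewrite -!dvdn_divisors // => dvd_am dvd_bm eq_ab.
  by rewrite -(codivisorK m_gt0 dvd_am) eq_ab codivisorK.
- exact: divisors_uniq.
move=> d; apply/mapP/idP => [[e] | ].
  by rewrite -!dvdn_divisors // => dvd_em ->; apply: dvdn_div.
rewrite -dvdn_divisors // => dvd_dm; exists (m %/ d); last by rewrite codivisorK.
by rewrite -dvdn_divisors // dvdn_div.
Qed.

Lemma rev_divisors n : 0 < n -> rev (divisors n) = [seq n %/ d | d <- divisors n].
Proof.
move=> n_gt0; apply: (@irr_sorted_eq _ (fun x y => y < x)).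
- by move=> x y z /= lt_yx lt_zy; apply: ltn_trans lt_zy lt_yx.
- by move=> x /=; rewrite ltnn.
- by rewrite rev_sorted; apply: sorted_divisors_ltn.
- rewrite sorted_map; apply: (@sub_in_sorted _ (mem (divisors n)) ltn).
  + move=> a b; rewrite /= -!dvdn_divisors // => dvd_an dvd_bn lt_ab.
    have b_gt0 := dvdn_gt0 n_gt0 dvd_bn.
    rewrite ltn_divRL // -[X in _ < X](divnK dvd_bn) ltn_pmul2l //.
    by rewrite divn_gt0 // dvdn_leq.
  + by apply/allP.
  + exact: sorted_divisors_ltn.
- by move=> d; rewrite mem_rev (perm_mem (perm_codivisors n_gt0)).
Qed.

Lemma filter_divisors_dvdn n m : 0 < n -> m %| n ->
  [seq d <- divisors n | d %| m] = divisors m.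
Proof.
move=> n_gt0 dvd_mn; have m_gt0 := dvdn_gt0 n_gt0 dvd_mn.
apply: (@irr_sorted_eq _ ltn); [exact: ltn_trans | exact: ltnn | | |].
- exact/sorted_filter/sorted_divisors_ltn/ltn_trans.
- exact: sorted_divisors_ltn.
move=> d; rewrite mem_filter -!dvdn_divisors //.
by apply/andP/idP => [[]// | dvd_dm]; split=> //; apply: dvdn_trans dvd_dm dvd_mn.
Qed.

Lemma prod_divisors_sqr n : 0 < n ->
  (\prod_(d <- divisors n) d) ^ 2 = n ^ size (divisors n).
Proof.
move=> n_gt0; rewrite expnS expn1.
rewrite -{2}(perm_big _ (perm_codivisors n_gt0)) big_map -big_split /= big_seq.
rewrite (eq_bigr (fun => n)) => [|d]; last first.
  by rewrite -dvdn_divisors // => dvd_dn; rewrite mulnC divnK.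
by rewrite -big_seq big_const_seq count_predT iter_muln_1.
Qed.

Lemma size_add_divisors f divs :
  size (PrimeDecompAux.add_divisors f divs) = f.2.+1 * size divs.
Proof.
case: f => p e /=; elim: e => [|e IHe] /=; first by rewrite mul1n.
by rewrite size_merge size_cat size_map IHe mulSn addnC.
Qed.

Lemma tauE n : tau n = \prod_(p <- primes n) (logn p n).+1.
Proof.
rewrite /tau /divisors prime_decompE.
elim: (primes n) => [|p ps IHps]; first by rewrite big_nil.
by rewrite map_cons big_cons -IHps (@size_add_divisors (p, logn p n)).
Qed.

Lemma gcdn_class_perm m e : 0 < m -> e %| m ->
  perm_eq [seq j <- index_iota 1 m.+1 | gcdn j m == e]
          [seq j * e | j <- [seq j <- index_iota 1 (m %/ e).+1 | coprime j (m %/ e)]].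
Proof.
move=> m_gt0 dvd_em; set d := m %/ e.
have e_gt0 : 0 < e := dvdn_gt0 m_gt0 dvd_em.
have def_m : m = d * e by rewrite /d divnK.
apply: uniq_perm.
- by rewrite filter_uniq // iota_uniq.
- rewrite map_inj_uniq ?filter_uniq ?iota_uniq // => a b /eqP.
  by rewrite eqn_pmul2r // => /eqP.
move=> j; rewrite mem_filter /index_iota subn1 /= mem_iota add1n ltnS.
apply/andP/mapP => [[/eqP gcd_jm /andP[j_gt0 le_jm]] | [i + ->]].
  have dvd_ej : e %| j by rewrite -gcd_jm dvdn_gcdl.
  have def_j : j = j %/ e * e by rewrite divnK.
  have coprime_je : coprime (j %/ e) d.
    by rewrite /coprime -(eqn_pmul2r e_gt0) muln_gcdl -def_j -def_m gcd_jm mul1n.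
  exists (j %/ e); last by rewrite divnK.
  rewrite mem_filter /index_iota subn1 /= mem_iota add1n ltnS coprime_je.
  by rewrite divn_gt0 // dvdn_leq // leq_div2r.
rewrite mem_filter /index_iota subn1 /= mem_iota add1n ltnS.
case/and3P=> [coprime_id i_gt0 le_id]; rewrite def_m -muln_gcdl (eqP coprime_id).
by rewrite mul1n eqxx muln_gt0 i_gt0 e_gt0 leq_mul2r le_id orbT.
Qed.

Lemma odd_half_mul a b : odd (a * b)./2 = odd (a./2 * b + a * b./2).
Proof.
rewrite -[a](odd_double_half a) -[b](odd_double_half b) !half_bit_double.
move: (odd a) (a./2) (odd b) (b./2) => r q r' q'.
have -> : (r + q.*2) * (r' + q'.*2) = (r && r') + (2 * q * q' + q * r' + q' * r).*2.
  by rewrite -!muln2; case: r; case: r' => /=; ring.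
rewrite half_bit_double !(oddD, oddM, odd_double) /=.
by case: r; case: r'; case: (odd q); case: (odd q').
Qed.

Lemma odd_half_prod (I : eqType) (r : seq I) (f : I -> nat) : all (fun i => 0 < f i) r ->
  odd (\prod_(i <- r) f i)./2 = odd (\sum_(i <- r) (f i)./2 * (\prod_(j <- r) f j %/ f i)).
Proof.
elim: r => [|a r IHr] /=; first by rewrite !big_nil.
case/andP=> fa_gt0 fr_gt0; rewrite !big_cons mulKn // odd_half_mul !oddD.
congr (_ (+) _).
have dvd_prod i : i \in r -> f i %| \prod_(j <- r) f j.
  by move=> r_i; rewrite (big_rem i) //= dvdn_mulr.
have -> : \sum_(i <- r) (f i)./2 * (f a * \prod_(j <- r) f j %/ f i)
          = f a * \sum_(i <- r) (f i)./2 * (\prod_(j <- r) f j %/ f i).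
  rewrite big_distrr; apply: eq_big_seq => i /dvd_prod dvd_i /=.
  by rewrite -muln_divA // mulnCA.
by rewrite !oddM IHr.
Qed.

Lemma odd_half_tau n :
  odd (tau n)./2 = odd (\sum_(p <- primes n) (logn p n).+1./2 * (tau n %/ (logn p n).+1)).
Proof. by rewrite tauE odd_half_prod //; apply/allP. Qed.

Definition rev_perm k : 'S_k := perm (@rev_ord_inj k).

Lemma odd_rev_perm k : rev_perm k = odd k./2 :> bool.
Proof.
elim: k => [|k IHk].
  by rewrite (_ : rev_perm 0 = 1%g) ?odd_perm1 //; apply/permP => -[].
have -> : rev_perm k.+1 = lift_perm ord0 ord_max (rev_perm k).
  apply/permP => i; case: (unliftP ord0 i) => [j|] ->.
    rewrite lift_perm_lift; apply: val_inj; rewrite /rev_perm !permE /= /bump /=.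
    have lt_jk := ltn_ord j; rewrite leqNgt (_ : k - j.+1 < k) /=; lia.
  by rewrite lift_perm_id; apply: val_inj; rewrite /rev_perm permE /= subn1.
by rewrite odd_lift_perm IHk /= uphalf_half oddD; case: (odd k); case: (odd k./2).
Qed.

Local Open Scope ring_scope.

Lemma big_partition_seq (V : nmodType) (I J : eqType) (r : seq I) (D : seq J)
    (p : I -> J) (F : I -> V) :
  uniq D -> {in r, forall i, p i \in D} ->
  \sum_(i <- r) F i = \sum_(d <- D) \sum_(i <- r | p i == d) F i.
Proof.
move=> uniq_D pD; under [RHS]eq_bigr => d _ do rewrite big_mkcond.
rewrite exchange_big /= big_seq [RHS]big_seq; apply: eq_bigr => i r_i.
rewrite (bigD1_seq (p i)) ?pD //= eqxx big1 ?addr0 // => d.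
by rewrite eq_sym => /negbTE ->.
Qed.

Lemma det_mx_perm_eq (R : comPzRingType) (T : eqType) (x0 : T) (F : T -> T -> R)
    (s t : seq T) :
  perm_eq s t ->
  \det (\matrix_(i < size s, j < size s) F (nth x0 s i) (nth x0 s j))
  = \det (\matrix_(i < size t, j < size t) F (nth x0 t i) (nth x0 t j)).
Proof.
move=> eq_st; rewrite -(perm_size eq_st).
have size_t : size t == size s by rewrite (perm_size eq_st).
have /tuple_permP[p /val_inj def_s] : perm_eq (in_tuple s) (Tuple size_t) by [].
have nth_s (i : 'I_(size s)) : nth x0 s i = nth x0 t (p i).
  by rewrite -(tnth_nth x0 (in_tuple s)) def_s tnth_mktuple (tnth_nth x0).
set M := \matrix_(i, j) F (nth x0 t i) (nth x0 t j).
have -> : \matrix_(i, j) F (nth x0 s i) (nth x0 s j) = col_perm p (row_perm p M).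
  by apply/matrixP => i j; rewrite !mxE !nth_s.
rewrite col_permE row_permE !det_mulmx !det_perm odd_permV mulrC mulrA.
by rewrite -expr2 sqrr_sign mul1r.
Qed.

Section Expi2pi.

Variable R : realType.
Local Notation e := (@expi2pi R).

Lemma expi2piD a b : e (a + b) = e a * e b.
Proof.
rewrite /expi2pi mulrDr cosD sinD.
by apply/eqP; rewrite eq_complex /=; apply/andP; split; apply/eqP; ring.
Qed.

Lemma expi2pi_nat (k : nat) : e k%:R = 1.
Proof.
rewrite /expi2pi (_ : 2 * pi * k%:R = 0 + (pi *+ 2) *+ k); last first.
  by rewrite add0r mulr_natr mulr2n mulrDl !mul1r.
by rewrite (periodicn (@cosD2pi R)) (periodicn (@sinD2pi R)) cos0 sin0.
Qed.

Lemma expi2pi0 : e 0 = 1.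
Proof. exact: (expi2pi_nat 0). Qed.

Lemma expi2piMn t k : e (t *+ k) = e t ^+ k.
Proof.
by elim: k => [|k IHk]; rewrite ?mulr0n ?expi2pi0 // mulrS expi2piD IHk exprS.
Qed.

Lemma expi2pi_ratio_neq1 (r m : nat) : (0 < r < m)%N -> e (r%:R / m%:R) != 1.
Proof.
case/andP=> r_gt0 lt_rm; have m_gt0 : (0 < m)%N := ltn_trans r_gt0 lt_rm.
apply/negP => /eqP [cos_eq1 _].
set th : R := pi * (r%:R / m%:R).
have sin_gt0 : 0 < sin th.
  apply: sin_gt0_pi; rewrite mulr_gt0 ?pi_gt0 ?divr_gt0 ?ltr0n //=.
  have m_gt0R : 0 < m%:R :> R by rewrite ltr0n.
  by rewrite -[X in _ < X]mulr1 ltr_pM2l ?pi_gt0 // ltr_pdivrMr // mul1r ltr_nat.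
have cos2_eq1 : cos th ^+ 2 = 1.
  move: cos_eq1; rewrite [2 * _ * _](_ : _ = th *+ 2); last by rewrite /th; ring.
  by rewrite cos_mulr2n /=; lra.
have /eqP : sin th ^+ 2 = 0 by rewrite sin2cos2 cos2_eq1 subrr.
rewrite sqrf_eq0 => /eqP sin_eq0.
by move: sin_gt0; rewrite sin_eq0 ltxx.
Qed.

Lemma sum_expi2pi (m x : nat) : (0 < m)%N ->
  \sum_(1 <= j < m.+1) e (j%:R * x%:R / m%:R) = if (m %| x)%N then m%:R else 0.
Proof.
move=> m_gt0; have m_neq0 : m%:R != 0 :> R by rewrite pnatr_eq0 -lt0n.
set z := e ((x %% m)%:R / m%:R).
have ez j : e (j%:R * x%:R / m%:R) = z ^+ j.
  have -> : j%:R * x%:R / m%:R = ((x %% m)%:R / m%:R) *+ j + (j * (x %/ m))%:R :> R.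
    by rewrite {1}(divn_eq x m) natrD !natrM -mulr_natl; field.
  by rewrite expi2piD expi2pi_nat mulr1 expi2piMn.
under eq_bigr => j _ do rewrite ez.
case: ifP => [/eqP x_mod_m | x_not_mod_m].
  rewrite /z x_mod_m mul0r expi2pi0.
  by under eq_bigr => j _ do rewrite expr1n; rewrite sumr_const_nat subn1.
have z_neq1 : z != 1.
  by rewrite expi2pi_ratio_neq1 // ltn_pmod // lt0n -/(dvdn m x) x_not_mod_m.
have zm : z ^+ m = 1 by rewrite /z -expi2piMn -[_ *+ m]mulr_natr mulfVK // expi2pi_nat.
rewrite big_add1 /= big_mkord; under eq_bigr => i _ do rewrite exprS.
have /eqP : (z - 1) * \sum_(i < m) z ^+ i = 0 by rewrite -subrX1 zm subrr.
by rewrite -mulr_sumr mulf_eq0 subr_eq0 (negbTE z_neq1) => /eqP ->; rewrite mulr0.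
Qed.

Lemma ramanujan_sum_natE d (x : nat) : ramanujan_sum R d x%:Z =
  \sum_(1 <= j < d.+1 | coprime j d) e (j%:R * x%:R / d%:R).
Proof. by apply: eq_bigr => j _; rewrite -pmulrn. Qed.

Lemma sum_ramanujan_sum_divisors (m x : nat) : (0 < m)%N ->
  \sum_(d <- divisors m) ramanujan_sum R d x%:Z = if (m %| x)%N then m%:R else 0.
Proof.
move=> m_gt0; rewrite -sum_expi2pi //.
rewrite [RHS](big_partition_seq (p := fun j => gcdn j m) _ (divisors_uniq m)); last first.
  by move=> j _; rewrite -dvdn_divisors // dvdn_gcdr.
rewrite -(perm_big _ (perm_codivisors m_gt0)) big_map big_seq [RHS]big_seq.
apply: eq_bigr => d; rewrite -dvdn_divisors // => dvd_dm.
have d_gt0 : (0 < d)%N := dvdn_gt0 m_gt0 dvd_dm.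
have d_neq0 : d%:R != 0 :> R by rewrite pnatr_eq0 -lt0n.
have md_neq0 : (m %/ d)%:R != 0 :> R by rewrite pnatr_eq0 -lt0n divn_gt0 // dvdn_leq.
rewrite -big_filter (perm_big _ (gcdn_class_perm m_gt0 dvd_dm)) big_map.
rewrite ramanujan_sum_natE big_filter; apply: eq_bigr => j _; congr e.
by rewrite -[in RHS](divnK dvd_dm) !natrM; field; rewrite d_neq0 md_neq0.
Qed.

End Expi2pi.

Section RamanujanDivisorMatrix.

Variables (R : realType) (n : nat).
Hypothesis n_gt0 : (0 < n)%N.

Local Notation k := (size (divisors n)).
Local Notation a i := (nth 0%N (divisors n) i).

Let dvdn_a (i : 'I_k) : (a i %| n)%N.
Proof. by rewrite dvdn_divisors ?mem_nth. Qed.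

Let a_gt0 (i : 'I_k) : (0 < a i)%N.
Proof. exact: dvdn_gt0 n_gt0 (dvdn_a i). Qed.

Definition divisor_dvdn_mx : 'M[R[i]]_k := \matrix_(i, j) (a j %| a i)%:R.

Lemma det_divisor_dvdn_mx : \det divisor_dvdn_mx = 1.
Proof.
rewrite det_trig; last first.
  apply/is_trig_mxP => i j lt_ij; rewrite mxE.
  have lt_a : (a i < a j)%N.
    by apply: (sorted_ltn_nth ltn_trans 0%N (sorted_divisors_ltn n)); rewrite ?inE.
  by rewrite gtnNdvd ?a_gt0.
by rewrite big1 // => i _; rewrite mxE dvdnn.
Qed.

Lemma ramanujan_divisor_mxE :
  divisor_dvdn_mx *m \matrix_(i < k, j < k) ramanujan_sum R (a i) (n %/ a j)%N%:Z
  = diag_mx (\row_i (a i)%:R) *m row_perm (rev_perm k) divisor_dvdn_mx.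
Proof.
apply/matrixP => i j; rewrite mul_diag_mx !mxE /rev_perm permE.
under eq_bigr => l _ do rewrite !mxE.
have -> : \sum_(l < k) (a l %| a i)%:R * ramanujan_sum R (a l) (n %/ a j)%N%:Z
          = \sum_(d <- divisors n | (d %| a i)%N) ramanujan_sum R d (n %/ a j)%N%:Z.
  rewrite [RHS]big_mkcond (big_nth 0%N) big_mkord; apply: eq_bigr => l _.
  by case: ifP; rewrite ?mul1r ?mul0r.
rewrite -big_filter filter_divisors_dvdn ?dvdn_a // sum_ramanujan_sum_divisors //.
rewrite /= -nth_rev // rev_divisors // (nth_map 0%N) //.
by rewrite !dvdn_divRL // mulnC; case: ifP; rewrite ?mulr1 ?mulr0.
Qed.

Lemma det_ramanujan_divisor_mx :
  \det (\matrix_(i < k, j < k) ramanujan_sum R (a i) (n %/ a j)%N%:Z)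
  = (\prod_(d <- divisors n) d)%:R * (-1) ^+ k./2.
Proof.
have := congr1 determinant ramanujan_divisor_mxE.
rewrite !det_mulmx row_permE det_mulmx det_perm det_divisor_dvdn_mx.
rewrite mul1r mulr1 det_diag => ->; rewrite odd_rev_perm signr_odd.
rewrite natr_prod (big_nth 0%N) big_mkord; congr (_ * _).
by apply: eq_bigr => i _; rewrite mxE.
Qed.

End RamanujanDivisorMatrix.

Lemma prod_divisors_sqrt (R : rcfType) n : (0 < n)%N ->
  ((\prod_(d <- divisors n) d)%:R : R) = Num.sqrt (n%:R : R) ^+ size (divisors n).
Proof.
move=> n_gt0; apply/eqP; rewrite -(@eqrXn2 _ 2) ?ler0n ?exprn_ge0 ?sqrtr_ge0 //.
by rewrite exprAC sqr_sqrtr ?ler0n // -natrX prod_divisors_sqr // natrX.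
Qed.

Theorem mainTheorem2 (R : realType) (n : nat) (s : seq nat) :
  (0 < n)%N -> perm_eq s (divisors n) ->
  \det (\matrix_(i < size s, j < size s)
          ramanujan_sum R (nth 0%N s i) ((n %/ nth 0%N s j)%N)%:Z)
  = (((Num.sqrt (n%:R : R)) ^+ tau n)%:C)%C
    * (-1) ^+ (\sum_(p <- primes n) ((logn p n).+1./2 * (tau n %/ (logn p n).+1)))%N.
Proof.
move=> n_gt0 s_divisors.
rewrite (det_mx_perm_eq 0%N (fun d e => ramanujan_sum R d (n %/ e)%N%:Z) s_divisors).
rewrite det_ramanujan_divisor_mx // -prod_divisors_sqrt // -(rmorph_nat (real_complex R)).
by rewrite -[in RHS]signr_odd -odd_half_tau signr_odd.
Qed.
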